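(* Let $X$ be an infinite set of integers. For all positive integers $h$ and $k$, \[ L_{X,h}(k) \subseteq L_{X,h}(k+1). \] If moreover $\mathbf{N}_0 = \{0,1,2,\ldots\} \subseteq X$, then \[ L_{X,h}(k) \subsetneq L_{X,h}(k+1). \]
   Context: For integers $a<b$, $[a,b]=\{j\in\mathbf{Z}: a\le j\le b\}$, and $[0,0]=\{0\}$. For a set $A$ of integers and a positive integer $h$, the $h$-fold sumset is $hA=\{a_1+\cdots+a_h : a_i\in A \text{ for all } i\}$ (summands not necessarily distinct). For a nonempty finite set $A$ of integers with $0\in hA$, $\ell_h(A)$ denotes the largest integer $n\ge 0$ such that $[0,n]\subseteq hA$ (so $\ell_h(A)=0$ if $0\in hA$ but $1\notin hA$); $\ell_h(A)$ is undefined if $0\notin hA$. For a nonempty set $X$ of integers, $\mathcal{A}_X(k)=\{A\subseteq X: |A|=k\}$, and $L_{X,h}(k)=\{\ell_h(A): A\in\mathcal{A}_X(k),\ \ell_h(A)\text{ defined}\}$. *)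

From mathcomp Require Import all_boot all_order all_algebra.
Set Implicit Arguments. Unset Strict Implicit. Unset Printing Implicit Defensive.
Import Order.TTheory GRing.Theory Num.Theory.
Local Open Scope ring_scope.

Definition infinite_set (X : int -> Prop) : Prop :=
  ~ (exists s : seq int, forall x, X x -> x \in s).

(* n belongs to the h-fold sumset hA: n = a_1 + ... + a_h with a_i in A
   (summands not necessarily distinct). A finite set is a duplicate-free seq. *)
Definition in_sumset (h : nat) (A : seq int) (n : int) : Prop :=
  exists s : seq int, size s = h /\ (forall a, a \in s -> a \in A) /\
    \sum_(a <- s) a = n.

Definition interval_in_sumset (h : nat) (A : seq int) (n : nat) : Prop :=
  forall j : nat, (j <= n)%N -> in_sumset h A j%:Z.

(* ell_is h A n  <->  ell_h(A) is defined and equals n: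
   n is the largest integer n >= 0 with [0,n] ⊆ hA
   (no such n exists exactly when 0 ∉ hA, i.e. ell_h(A) undefined). *)
Definition ell_is (h : nat) (A : seq int) (n : nat) : Prop :=
  interval_in_sumset h A n /\ (forall m : nat, interval_in_sumset h A m -> (m <= n)%N).

Definition in_calA (X : int -> Prop) (k : nat) (A : seq int) : Prop :=
  uniq A /\ size A = k /\ (forall a, a \in A -> X a).

Definition in_L (X : int -> Prop) (h k : nat) (n : nat) : Prop :=
  exists A : seq int, in_calA X k A /\ ell_is h A n.

(** Adding to A ∈ 𝒜_X(k) an element x ∈ X of huge absolute value does not
    change ℓ_h: any h-fold sum that uses x at least once has absolute value
    at least |x| - h max_{a ∈ A} |a|.
    If N_0 ⊆ X, take A realising n = max L_{X,h}(k) (this set is bounded by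
    k^h); write 0 = a_1 + ... + a_h with a_1 ≥ 0 and add x = a_1 + n + 1
    to A, so that n + 1 ∈ h(A ∪ {x}) and ℓ_h(A ∪ {x}) > n. *)

From mathcomp Require Import all_boot all_order all_algebra zify.
From Stdlib Require Import Classical.
Set Implicit Arguments. Unset Strict Implicit. Unset Printing Implicit Defensive.
Import Order.TTheory GRing.Theory Num.Theory.
Local Open Scope ring_scope.

Lemma classic_ex_maxn (P : nat -> Prop) (b : nat) :
  (exists n, P n) -> (forall n, P n -> (n < b)%N) ->
  exists2 n, P n & forall m, P m -> (m <= n)%N.
Proof.
move=> [n Pn] ltPb.
elim: b n Pn ltPb => [|b IHb] n Pn ltPb; first by have := ltPb n Pn.
case: (classic (exists2 m, P m & (b <= m)%N)) => [[m Pm le_bm]|noPb].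
  exists m => // m' Pm'; have := ltPb m' Pm'; lia.
apply: (IHb n Pn) => m Pm; rewrite ltnNge; apply/negP => le_bm.
by apply: noPb; exists m.
Qed.

Section Sumsets.

Variable h : nat.

Lemma in_sumset_sub (A B : seq int) n :
  {subset A <= B} -> in_sumset h A n -> in_sumset h B n.
Proof. by move=> sAB [s [hs [sA <-]]]; exists s; split=> //; split=> // a /sA/sAB. Qed.

Lemma interval_in_sumset_sub (A B : seq int) n :
  {subset A <= B} -> interval_in_sumset h A n -> interval_in_sumset h B n.
Proof. by move=> sAB An j le_jn; apply: in_sumset_sub sAB (An j le_jn). Qed.

Lemma interval_in_sumsetS (A : seq int) n :
  interval_in_sumset h A n -> in_sumset h A n.+1 -> interval_in_sumset h A n.+1.
Proof.
move=> An An1 j; rewrite leq_eqVlt ltnS => /predU1P [->|] //; exact: An.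
Qed.

Lemma ell_is_succ_notin (A : seq int) n :
  ell_is h A n -> ~ in_sumset h A n.+1.
Proof.
by move=> [An maxn] /(interval_in_sumsetS An)/maxn; rewrite ltnn.
Qed.

Lemma ell_is_of_succ_notin (A : seq int) n :
  interval_in_sumset h A n -> ~ in_sumset h A n.+1 -> ell_is h A n.
Proof.
move=> An An1; split => // m Am; rewrite leqNgt; apply/negP => lt_nm.
exact/An1/Am.
Qed.

Lemma in_sumset0 (A : seq int) : 0 \in A -> in_sumset h A 0.
Proof.
move=> A0; exists (nseq h 0); split; first by rewrite size_nseq.
split; first by move=> a /nseqP [->].
by rewrite big_nseq iter_addr_0 mul0rn.
Qed.

Fixpoint seqs_over (A : seq int) (l : nat) : seq (seq int) :=
  if l is l'.+1 then [seq a :: s | a <- A, s <- seqs_over A l'] else [:: [::]].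

Lemma size_seqs_over (A : seq int) l : size (seqs_over A l) = (size A ^ l)%N.
Proof. by elim: l => //= l IHl; rewrite size_allpairs IHl expnS. Qed.

Lemma mem_seqs_over (A : seq int) (s : seq int) :
  {subset s <= A} -> s \in seqs_over A (size s).
Proof.
elim: s => //= a s IHs sA.
apply: (allpairs_f (fun a s => a :: s)); first by apply: sA; exact: mem_head.
by apply: IHs => b sb; apply: sA; rewrite inE sb orbT.
Qed.

(* [0, m] ⊆ hA injects into the |A|^h sequences of length h over A. *)
Lemma interval_in_sumset_lt (A : seq int) m :
  interval_in_sumset h A m -> (m < size A ^ h)%N.
Proof.
move=> Am.
have uniq_range : uniq (map Posz (iota 0 m.+1)).
  by rewrite map_inj_uniq ?iota_uniq // => i j [].
have range_sums : {subset map Posz (iota 0 m.+1) <=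
                   map (fun s => \sum_(a <- s) a) (seqs_over A h)}.
  move=> z /mapP [j]; rewrite mem_iota add0n => le_jm ->.
  have [s [hs [sA <-]]] := Am j le_jm.
  by apply: map_f; rewrite -hs; apply: mem_seqs_over.
have := uniq_leq_size uniq_range range_sums.
by rewrite !size_map size_iota size_seqs_over.
Qed.

Lemma ell_exists (A : seq int) n :
  interval_in_sumset h A n -> exists2 l, (n <= l)%N & ell_is h A l.
Proof.
move=> An.
have [l Al maxl] := classic_ex_maxn (ex_intro _ n An) (@interval_in_sumset_lt A).
by exists l; [exact: maxl | split].
Qed.

End Sumsets.

Section FarSummand.

Variable R : realDomainType.

Lemma exists_norm_bound (A : seq R) :
  exists2 M, 0 <= M & forall a, a \in A -> `|a| <= M.
Proof.
elim: A => [|a A [M M_ge0 AM]]; first by exists 0.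
exists (`|a| + M); first by rewrite addr_ge0.
move=> b /predU1P [->|/AM]; first by rewrite lerDl.
by move/le_trans; apply; rewrite lerDr.
Qed.

(* Multiplying by x makes every summand ≥ -|x| M, and the summand x itself
   contributes x^2. *)
Lemma norm_sum_far_ge (x M : R) (A s : seq R) :
  0 <= M -> (forall a, a \in A -> `|a| <= M) ->
  {subset s <= x :: A} -> x \in s ->
  `|x| - M *+ size s <= `|\sum_(b <- s) b|.
Proof.
move=> M_ge0 AM sA xs.
have [->|x_neq0] := eqVneq x 0.
  by rewrite normr0 sub0r (le_trans _ (normr_ge0 _)) // oppr_le0 mulrn_wge0.
have x_gt0 : 0 < `|x| by rewrite normr_gt0.
have summand_ge b : b \in x :: A -> - (`|x| * M) <= x * b.
  move=> /predU1P [->|/AM bM].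
    by rewrite (le_trans _ (sqr_ge0 x)) // oppr_le0 mulr_ge0.
  rewrite lerNl (le_trans (ler_norm _)) // normrN normrM.
  exact: ler_wpM2l.
have sum_rem_ge : - (`|x| * M) *+ size (rem x s) <= \sum_(b <- rem x s) x * b.
  rewrite -iter_addr_0 -[size _]count_predT -big_const_seq.
  by rewrite !big_seq; apply: ler_sum => b /mem_rem/sA/summand_ge.
have x_sum : x * \sum_(b <- s) b = x * x + \sum_(b <- rem x s) x * b.
  by rewrite (perm_big _ (perm_to_rem xs)) big_cons mulrDr mulr_sumr.
rewrite -(ler_pM2l x_gt0) -normrM (le_trans _ (ler_norm _)) // x_sum.
rewrite mulrBr -[x * x]ger0_norm ?sqr_ge0 // normrM lerD2l.
rewrite (le_trans _ sum_rem_ge) // mulNrn -mulrnAr lerN2.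
by apply: ler_wpM2l => //; apply: ler_wpMn2l => //; rewrite size_rem ?leq_pred.
Qed.

Lemma has_ge0_of_sum_ge0 (s : seq R) :
  s != [::] -> 0 <= \sum_(a <- s) a -> exists2 a, a \in s & 0 <= a.
Proof.
move=> s_neq0 sum_ge0; apply/hasP; apply: contraT => /hasPn all_lt0.
have : \sum_(a <- s | a \in s) a < \sum_(a <- s | a \in s) 0.
  apply: ltr_sum => [|a /all_lt0]; last by rewrite ltNge.
  by case: s s_neq0 {sum_ge0 all_lt0} => // a s _; rewrite /= mem_head.
by rewrite -big_seq big1_eq ltNge sum_ge0.
Qed.

End FarSummand.

Lemma infinite_set_norm_gt (X : int -> Prop) (B : int) :
  infinite_set X -> exists2 x, X x & B < `|x|.
Proof.
move=> infX; apply: NNPP => noFar; apply: infX.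
exists [seq i%:Z - B | i <- iota 0 (2 * absz B).+1] => x Xx.
have le_xB : `|x| <= B.
  by rewrite leNgt; apply/negP => lt_Bx; apply: noFar; exists x.
apply/mapP; exists (absz (x + B)); first by rewrite mem_iota add0n; lia.
lia.
Qed.

Lemma in_calA_cons (X : int -> Prop) k (A : seq int) x :
  in_calA X k A -> X x -> x \notin A -> in_calA X k.+1 (x :: A).
Proof.
move=> [uA [sizeA XA]] Xx xA; split; first by rewrite /= xA uA.
by split=> [|a /predU1P [->|/XA]] //=; rewrite sizeA.
Qed.

Lemma in_L_succ (X : int -> Prop) h k n :
  infinite_set X -> (0 < h)%N -> in_L X h k n -> in_L X h k.+1 n.
Proof.
move=> infX h_gt0 [A [calA [An maxn]]].
have [M M_ge0 AM] := exists_norm_bound A.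
have [x Xx far_x] := infinite_set_norm_gt (n.+1%:Z + M *+ h) infX.
have xA : x \notin A.
  apply/negP => /AM; apply/negP; rewrite -ltNge (le_lt_trans _ far_x) //.
  by rewrite ler_wpDl // -{1}[M]mulr1n; apply: ler_wpMn2l.
exists (x :: A); split; first exact: in_calA_cons.
apply: ell_is_of_succ_notin; first exact: interval_in_sumset_sub (mem_subseq (subseq_cons A x)) An.
move=> [s [hs [sA sum_s]]].
have [xs|xs] := boolP (x \in s).
  have := norm_sum_far_ge M_ge0 AM sA xs.
  by rewrite sum_s hs lerBlDr [`|Posz _|]ger0_norm // leNgt far_x.
apply: (ell_is_succ_notin (conj An maxn)); exists s; split => //; split => // a sa.
by have /predU1P [xa|] := sA a sa; first by rewrite -xa sa in xs.
Qed.

Lemma in_sumset_cons_shift h (A s : seq int) a d :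
  size s = h -> {subset s <= A} -> a \in s ->
  in_sumset h (a + d :: A) (\sum_(b <- s) b + d).
Proof.
move=> hs sA sa; exists (a + d :: rem a s); split.
  by rewrite -hs (perm_size (perm_to_rem sa)).
split=> [b /predU1P [->|/mem_rem/sA Ab]|]; first exact: mem_head.
  by rewrite inE Ab orbT.
by rewrite big_cons (perm_big _ (perm_to_rem sa)) big_cons addrAC.
Qed.

Lemma in_L_succ_gt (X : int -> Prop) h k (A : seq int) n :
  (0 < h)%N -> (forall m : nat, X (Posz m)) ->
  in_calA X k A -> ell_is h A n -> exists2 l, (n < l)%N & in_L X h k.+1 l.
Proof.
move=> h_gt0 natX calA ellA.
have [s [hs [sA sum_s]]] := ellA.1 0%N (leq0n n).
have [[a|a] sa a_ge0] // : exists2 a, a \in s & 0 <= a.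
  by apply: has_ge0_of_sum_ge0; rewrite ?sum_s // -size_eq0 hs -lt0n.
set x : int := Posz (a + n.+1).
have xn : in_sumset h (x :: A) n.+1.
  by have := in_sumset_cons_shift (n.+1%:Z) hs sA sa; rewrite sum_s add0r -PoszD.
have xA : x \notin A.
  apply/negP => xA; apply: (ell_is_succ_notin ellA).
  by apply: in_sumset_sub xn => b /predU1P [->|].
have [l lt_nl ellx] := ell_exists (interval_in_sumsetS
  (interval_in_sumset_sub (mem_subseq (subseq_cons A x)) ellA.1) xn).
by exists l => //; exists (x :: A); split=> //; exact: in_calA_cons (natX _) xA.
Qed.

Lemma in_L_exists (X : int -> Prop) h k :
  (0 < k)%N -> (forall m : nat, X (Posz m)) -> exists n, in_L X h k n.
Proof.
move=> k_gt0 natX; set A := map Posz (iota 0 k).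
have A_0 : interval_in_sumset h A 0.
  move=> j; rewrite leqn0 => /eqP -> /=; apply: in_sumset0.
  by apply/mapP; exists 0%N; rewrite ?mem_iota.
have [l _ ellA] := ell_exists A_0.
exists l, A; split=> //; split; first by rewrite map_inj_uniq ?iota_uniq // => i j [].
by rewrite size_map size_iota; split=> // _ /mapP [i _ ->].
Qed.

Lemma in_L_lt (X : int -> Prop) h k n : in_L X h k n -> (n < k ^ h)%N.
Proof. by move=> [A [[_ [<- _]] [An _]]]; apply: interval_in_sumset_lt An. Qed.

Close Scope ring_scope.

Theorem mainTheorem1 (X : int -> Prop) (hX : infinite_set X) (h k : nat)
    (hh : (0 < h)%N) (hk : (0 < k)%N) :
  (forall n : nat, in_L X h k n -> in_L X h k.+1 n) /\
  ((forall m : nat, X (Posz m)) ->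
     (forall n : nat, in_L X h k n -> in_L X h k.+1 n) /\
     exists n : nat, in_L X h k.+1 n /\ ~ in_L X h k n).
Proof.
have L_sub n : in_L X h k n -> in_L X h k.+1 n by exact: in_L_succ.
split=> // natX; split=> //.
have [n Ln maxn] := classic_ex_maxn (in_L_exists h hk natX) (@in_L_lt X h k).
have [A [calA ellA]] := Ln.
have [l lt_nl Ll] := in_L_succ_gt hh natX calA ellA.
by exists l; split=> // /maxn; rewrite leqNgt lt_nl.
Qed.
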